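(* Let $\mathbb{F}_q$ be a finite field of characteristic $p\ge3$. For every $u\in\mathbb{F}_q\setminus\{0,1\}$, $$\#\mathcal{I}_{\mathrm{L},u}=\begin{cases}1,& u=-1 \text{ and } p=3,\\ 3,& u\in\{-1,2,2^{-1}\},\ q\equiv1,3,7\pmod 8,\ p>3,\\ 2,& u\in\{-1,2\},\ q\equiv5\pmod8,\\ 1,& u=2^{-1},\ q\equiv5\pmod8,\\ 2,& u^2-u+1=0,\ q\equiv1\pmod{12},\ p>3,\\ 1,& u^2-u+1=0,\ q\not\equiv1\pmod{12},\\ 3,& \chi_2(-1)=-1 \text{ and } u\notin\mathcal{B},\\ 2,& \chi_2(-1)=1,\ \chi_2(u)=\chi_2(1-u)=-1,\ u\notin\mathcal{B},\\ 4,& \chi_2(-1)=1,\ \chi_2(u)\chi_2(1-u)=-1,\ u\notin\mathcal{B},\\ 6,& \chi_2(-1)=1,\ \chi_2(u)=\chi_2(1-u)=1,\ u\notin\mathcal{B}.\end{cases}$$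
   Context: For $u\in\mathbb{F}_q\setminus\{0,1\}$, $E_{\mathrm{L},u}$ is the Legendre curve $Y^2=X(X-1)(X-u)$. Two elliptic curves in Weierstrass form are $\mathbb{F}_q$-isomorphic ($\cong_{\mathbb{F}_q}$) if one is transformed into the other by $X\mapsto\alpha^2\tilde X+\beta$, $Y\mapsto\alpha^3\tilde Y+\alpha^2\gamma\tilde X+\delta$ with $\alpha,\beta,\gamma,\delta\in\mathbb{F}_q$, $\alpha\ne0$. Define $\mathcal{I}_{\mathrm{L},u}=\{v\in\mathbb{F}_q\setminus\{0,1\}: E_{\mathrm{L},u}\cong_{\mathbb{F}_q}E_{\mathrm{L},v}\}$. Let $\mathcal{B}=\{u\in\mathbb{F}_q : (u^2-u+1)(u+1)(u-2)(2u-1)=0\}$. $\chi_2$ is the quadratic character of $\mathbb{F}_q$ ($\chi_2(w)=1$ if $w\ne0$ is a square, $-1$ if $w$ is a nonsquare). *)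

From HB Require Import structures.
From mathcomp Require Import all_boot all_order all_algebra.
Set Implicit Arguments. Unset Strict Implicit. Unset Printing Implicit Defensive.
Import Order.TTheory GRing.Theory Num.Theory.
Local Open Scope ring_scope.

Section Legendre.
Variable F : finFieldType.

(* Bivariate polynomials over F: outer variable is Y ('X), inner is X. *)
Definition cst2 (c : F) : {poly {poly F}} := c%:P%:P.
Definition varX : {poly {poly F}} := 'X%:P.
Definition varY : {poly {poly F}} := 'X.

Definition legcubic (R : pzRingType) (u x : R) : R := x * (x - 1) * (x - u).

Definition legendre_poly (u : F) : {poly {poly F}} :=
  varY ^+ 2 - legcubic (cst2 u) varX.

(* E_{L,u} ≅_{F_q} E_{L,v}: the substitution X -> a^2 X + b,
   Y -> a^3 Y + a^2 c X + d (a <> 0) transforms the Weierstrass equation of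
   E_{L,u} into that of E_{L,v}, i.e. the substituted polynomial equals
   a^6 times the polynomial of E_{L,v}. *)
Definition legendre_iso (u v : F) : bool :=
  [exists a : F, exists b : F, exists c : F, exists d : F,
    (a != 0) &&
    ((cst2 (a ^+ 3) * varY + cst2 (a ^+ 2 * c) * varX + cst2 d) ^+ 2
       - legcubic (cst2 u) (cst2 (a ^+ 2) * varX + cst2 b)
     == cst2 (a ^+ 6) * legendre_poly v)].

Definition I_L (u : F) : {set F} :=
  [set v : F | (v != 0) && (v != 1) && legendre_iso u v].

Definition chi2 (x : F) : int :=
  if x == 0 then 0 else if [exists y : F, y ^+ 2 == x] then 1 else -1.

Definition inB (u : F) : bool :=
  (u ^+ 2 - u + 1) * (u + 1) * (u - 2) * (2 * u - 1) == 0.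

End Legendre.

From HB Require Import structures.
From mathcomp Require Import all_boot all_algebra all_fingroup all_solvable all_field.
From mathcomp Require Import ring zify.
Import GRing.Theory.
Set Implicit Arguments. Unset Strict Implicit. Unset Printing Implicit Defensive.
Local Open Scope ring_scope.

(* 1. Isomorphisms.  Comparing the coefficients of Y in the transformed equation
      forces c = d = 0; then E_{L,u} ~ E_{L,v} iff, for some a <> 0 and b, the
      substitution X -> a^2 X + b turns X(X-1)(X-u) into a^6 X(X-1)(X-v).  The
      constant coefficient makes b a root r0 of X(X-1)(X-u), and Vieta's formulas
      for the two other coefficients give a^2 = r1 - r0, v = (r2 - r0)/(r1 - r0)
      for an ordering (r0, r1, r2) of the roots 0, 1, u.  So I_{L,u} consists of
      the six values u, 1/u, 1-u, 1/(1-u), (u-1)/u, u/(u-1), each present iff the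
      matching difference r1 - r0 (one of 1, u, -1, u-1, -u, 1-u) is a square.
   2. Quadratic residues in F_q, q odd: Euler's criterion (through a primitive
      root), -1 is a square iff q = 1 (mod 4), and 2 is a square iff
      q = 1, 7 (mod 8); the latter by applying the Frobenius x -> x^q to
      t = z - z^3, where z is the class of X in F[X]/(X^4 + 1), so that t^2 = 2.
   3. Counting.  Outside B the six values are pairwise distinct, which gives the
      generic formula; on B they collapse onto the orbits {-1, 2, 1/2} or
      {w, 1 - w} (w^2 - w + 1 = 0), and onto {-1} in characteristic 3.
   The main theorem is then a case analysis on q modulo 8 and 12. *)

Lemma MXaddC_eq0 (R : nzRingType) (p : {poly R}) (c : R) :
  (p * 'X + c%:P == 0) = (p == 0) && (c == 0).
Proof. by rewrite -[_ + _ == 0]size_poly_eq0 size_MXaddC; case: ifP. Qed.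

Lemma linear_poly_eq0 (R : nzRingType) (c1 c0 : R) :
  (c1%:P * 'X + c0%:P == 0) = (c1 == 0) && (c0 == 0).
Proof. by rewrite MXaddC_eq0 polyC_eq0. Qed.

Lemma quadratic_poly_eq0 (R : nzRingType) (c2 c1 c0 : R) :
  ((c2%:P * 'X + c1%:P) * 'X + c0%:P == 0) = [&& c2 == 0, c1 == 0 & c0 == 0].
Proof. by rewrite MXaddC_eq0 linear_poly_eq0 andbA. Qed.

Lemma size_undup_eqi (T : eqType) (s t : seq T) :
  s =i t -> uniq t -> size (undup s) = size t.
Proof.
move=> st ut; apply/perm_size/uniq_perm; rewrite ?undup_uniq // => x.
by rewrite mem_undup.
Qed.

Lemma odd_mod8 (n : nat) : odd n -> (n %% 8 \in [:: 1; 3; 5; 7])%N.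
Proof.
rewrite -(@odd_mod _ 8) // => rodd; have := ltn_pmod n (isT : (0 < 8)%N).
by move: (n %% 8)%N rodd => r; do 8?case: r => [|r] //.
Qed.

Lemma pow3_mod8 (k : nat) : (3 ^ k %% 8 \in [:: 1; 3])%N.
Proof.
elim: k => [|k IHk] //; rewrite expnS -modnMmr.
by move: IHk; rewrite !inE => /orP[] /eqP ->.
Qed.

Lemma natr_eq0_pchar (R : nzRingType) (p n : nat) :
  p \in [pchar R] -> prime n -> (n%:R == 0 :> R) = (p == n).
Proof. by move=> pR n_pr; rewrite -(dvdn_pcharf pR) dvdn_prime2 ?(pcharf_prime pR). Qed.

Lemma card_finRing_pchar (R : finNzRingType) (p : nat) :
  p \in [pchar R] -> exists k, #|R| = (p ^ k.+1)%N.
Proof.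
move=> pR; move/abelem_pgroup/card_pgroup: (fin_ring_pchar_abelem pR); rewrite cardsT.
case: (logn p #|R|) => [|k] cardR; last by exists k.
by have := finNzRing_gt1 R; rewrite cardR.
Qed.

Lemma sixth_root_neq01 (R : nzRingType) (u : R) :
  u ^+ 2 - u + 1 = 0 -> u != 0 /\ u != 1.
Proof.
move=> w; split; apply: contra_eq_neq w => ->;
  by rewrite ?expr0n ?expr1n /= ?subrr ?add0r oner_neq0.
Qed.

Section Squares.
Variable F : finFieldType.

Definition is_square (x : F) : bool := [exists y : F, y ^+ 2 == x].

Lemma is_square1 : is_square 1.
Proof. by apply/existsP; exists 1; rewrite expr1n. Qed.

Lemma is_squareV (x : F) : is_square x^-1 = is_square x.
Proof.
suff sqV (y : F) : is_square y -> is_square y^-1 by apply/idP/idP => /sqV; rewrite ?invrK.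
by case/existsP => a /eqP <-; apply/existsP; exists a^-1; rewrite exprVn.
Qed.

Lemma chi2E (x : F) : x != 0 -> chi2 x = if is_square x then 1 else -1.
Proof. by move=> x0; rewrite /chi2 (negPf x0). Qed.
End Squares.

Section LegendreIsomorphisms.
Variable F : finFieldType.

Definition shift_match (u v s b : F) : bool :=
  legcubic u%:P (s%:P * 'X + b%:P) == (s ^+ 3)%:P * legcubic v%:P 'X.

(* The transformed equation minus a^6 times the equation of E_{L,v}, written
   as (coefficient of Y) * Y + (coefficient of 1). *)
Lemma substitution_split (u v a b c d : F) :
  (cst2 (a ^+ 3) * varY F + cst2 (a ^+ 2 * c) * varX F + cst2 d) ^+ 2
    - legcubic (cst2 u) (cst2 (a ^+ 2) * varX F + cst2 b)
    - cst2 (a ^+ 6) * legendre_poly v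
  = ((2 * a ^+ 5 * c)%:P * 'X + (2 * a ^+ 3 * d)%:P)%:P * 'X
    + (((a ^+ 2 * c)%:P * 'X + d%:P) ^+ 2 - legcubic u%:P ((a ^+ 2)%:P * 'X + b%:P)
       + (a ^+ 6)%:P * legcubic v%:P 'X)%:P.
Proof. by rewrite /legendre_poly /legcubic /cst2 /varX /varY; ring. Qed.

(* In odd characteristic the Y-coefficient forces c = d = 0, so only the
   substitutions X -> a^2 X + b, Y -> a^3 Y matter. *)
Lemma legendre_iso_shift (u v : F) : (2 : F) != 0 ->
  legendre_iso u v =
  [exists a : F, exists b : F, (a != 0) && shift_match u v (a ^+ 2) b].
Proof.
move=> two0; rewrite /legendre_iso; apply/existsP/existsP.
  case=> a /existsP[b /existsP[c /existsP[d /andP[a0]]]].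
  rewrite -subr_eq0 substitution_split MXaddC_eq0 polyC_eq0 linear_poly_eq0 !mulf_eq0.
  rewrite (negPf two0) (negPf a0) /= => /andP[/andP[/eqP-> /eqP->] cubic_eq].
  exists a; apply/existsP; exists b; rewrite a0 /=.
  move: cubic_eq; rewrite mulr0 polyC0 mul0r add0r expr0n /= sub0r addrC subr_eq0.
  by rewrite /shift_match -exprM eq_sym.
case=> a /existsP[b /andP[a0 hmatch]].
exists a; apply/existsP; exists b; apply/existsP; exists 0; apply/existsP; exists 0.
rewrite a0 -subr_eq0 substitution_split !(mulr0, mul0r, polyC0, add0r) /=.
rewrite expr0n /= sub0r addrC polyC_eq0 subr_eq0 eq_sym.
by move: hmatch; rewrite /shift_match -exprM.
Qed.

(* The derivative of X(X-1)(X-u) at b. *)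
Definition legderiv (u b : F) : F := 3 * b ^+ 2 - 2 * (1 + u) * b + u.

(* shift_match, coefficient by coefficient: X^0, X^2 and X^1. *)
Lemma shift_match_coeffs (u v s b : F) : s != 0 ->
  shift_match u v s b =
  [&& [|| b == 0, b == 1 | b == u], s * (1 + v) == 1 + u - 3 * b
    & s ^+ 2 * v == legderiv u b].
Proof.
move=> s0; have -> : shift_match u v s b =
    (((s ^+ 2 * (s * (1 + v) - (1 + u - 3 * b)))%:P * 'X
      + (s * (legderiv u b - s ^+ 2 * v))%:P) * 'X + (legcubic u b)%:P == 0).
  by rewrite /shift_match -subr_eq0 /legcubic /legderiv; congr (_ == 0); ring.
rewrite quadratic_poly_eq0 !mulf_eq0 (negPf s0) /= !subr_eq0 -orbA.
by apply/and3P/and3P => -[? ? ?]; split => //; rewrite eq_sym.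
Qed.

Lemma vieta_pair (s v t1 t2 : F) : s != 0 ->
  s * (1 + v) = t1 + t2 -> s ^+ 2 * v = t1 * t2 ->
  (s = t1 /\ v = t2 / t1) \/ (s = t2 /\ v = t1 / t2).
Proof.
move=> s0 hsum hprod.
have : (s - t1) * (s - t2) == 0.
  have -> : (s - t1) * (s - t2) = s ^+ 2 - (t1 + t2) * s + t1 * t2 by ring.
  by rewrite -hsum -hprod; apply/eqP; ring.
have sv t t' : s = t -> s ^+ 2 * v = t * t' -> v = t' / t.
  move=> st e; have t0 : t != 0 by rewrite -st.
  apply: (mulfI t0); rewrite mulrCA divff // mulr1.
  by apply: (mulfI t0); rewrite mulrA -expr2 -e st.
rewrite mulf_eq0 !subr_eq0 => /orP[/eqP st | /eqP st]; [left | right]; split => //.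
  exact: sv.
by apply: sv; rewrite // hprod mulrC.
Qed.

(* The six orderings (r0, r1, r2) of the roots 0, 1, u, stored as
   (r0, r1 - r0, r2 - r0). *)
Definition legendre_shifts (u : F) : seq (F * F * F) :=
  [:: (0, 1, u); (0, u, 1); (1, -1, u - 1); (1, u - 1, -1);
      (u, -u, 1 - u); (u, 1 - u, -u)].

(* Each entry (b, t1, t2) has b a root, the Vieta relations at b, and
   (t1 t2 (t2 - t1))^2 = (u (u - 1))^2, which makes it nondegenerate. *)
Lemma legendre_shifts_vieta (u : F) :
  all (fun m => [&& [|| m.1.1 == 0, m.1.1 == 1 | m.1.1 == u],
                    m.1.2 + m.2 == 1 + u - 3 * m.1.1,
                    m.1.2 * m.2 == legderiv u m.1.1
                  & (m.1.2 * m.2 * (m.2 - m.1.2)) ^+ 2 == (u * (u - 1)) ^+ 2])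
      (legendre_shifts u).
Proof.
rewrite /= /legderiv !eqxx ?orbT /=.
by repeat (apply/andP; split); try (apply/eqP; ring).
Qed.

Lemma root_shifts (u b : F) : [|| b == 0, b == 1 | b == u] ->
  exists t1 t2, (b, t1, t2) \in legendre_shifts u /\ (b, t2, t1) \in legendre_shifts u.
Proof.
by case/or3P => /eqP->; [exists 1, u | exists (-1), (u - 1) | exists (-u), (1 - u)];
  rewrite !inE !eqxx ?orbT.
Qed.

Lemma legendre_shift_nondeg (u : F) m : u != 0 -> u != 1 ->
  m \in legendre_shifts u -> [&& m.1.2 != 0, m.2 != 0 & m.2 != m.1.2].
Proof.
move=> u0 u1 mshift.
have /and4P[_ _ _ /eqP nondeg] := allP (legendre_shifts_vieta u) _ mshift.
have : (u * (u - 1)) ^+ 2 != 0 by rewrite !expf_neq0 ?mulf_neq0 ?subr_eq0.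
by rewrite -nondeg !expf_eq0 !mulf_eq0 !negb_or subr_eq0 /= -andbA.
Qed.

Lemma shift_matchP (u v s b : F) : s != 0 ->
  shift_match u v s b =
  has (fun m => [&& m.1.1 == b, m.1.2 == s & m.2 / m.1.2 == v]) (legendre_shifts u).
Proof.
move=> s0; rewrite shift_match_coeffs //; apply/idP/hasP.
  case/and3P => broot /eqP hsum /eqP hprod.
  have [t1 [t2 [m12 m21]]] := root_shifts broot.
  have /and4P[_ /eqP sum12 /eqP prod12 _] := allP (legendre_shifts_vieta u) _ m12.
  rewrite /= -sum12 -prod12 in hsum hprod.
  case: (vieta_pair s0 hsum hprod) => -[-> ->]; [exists (b, t1, t2) | exists (b, t2, t1)];
    by rewrite //= !eqxx.
case=> m mshift /and3P[/eqP <- /eqP ms /eqP <-]; move: s0; rewrite -ms => t10.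
have /and4P[-> /eqP <- /eqP <- _] := allP (legendre_shifts_vieta u) _ mshift.
by rewrite /=; apply/andP; split; apply/eqP; field.
Qed.

Lemma legendre_isoP (u v : F) : (2 : F) != 0 -> u != 0 -> u != 1 ->
  legendre_iso u v =
  has (fun m => is_square m.1.2 && (v == m.2 / m.1.2)) (legendre_shifts u).
Proof.
move=> two0 u0 u1; rewrite legendre_iso_shift //; apply/existsP/hasP.
  case=> a /existsP[b /andP[a0]]; rewrite shift_matchP ?expf_neq0 //.
  case/hasP => m mshift /and3P[_ /eqP ms /eqP mv]; exists m; rewrite // mv eqxx andbT.
  by apply/existsP; exists a; rewrite ms.
case=> m mshift /andP[/existsP[a /eqP a2] /eqP mv].
have /and3P[t10 _ _] := legendre_shift_nondeg u0 u1 mshift.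
have a0 : a != 0 by apply: contraNneq t10 => a0; rewrite -a2 a0 expr0n.
exists a; apply/existsP; exists m.1.1; rewrite a0 shift_matchP ?expf_neq0 //.
by apply/hasP; exists m; rewrite // a2 mv !eqxx.
Qed.

(* The values v attained, listed with repetitions. *)
Definition iso_values (u : F) : seq F :=
  [seq m.2 / m.1.2 | m <- legendre_shifts u & is_square m.1.2].

Lemma mem_iso_values (u v : F) :
  (v \in iso_values u) =
  has (fun m => is_square m.1.2 && (v == m.2 / m.1.2)) (legendre_shifts u).
Proof.
apply/mapP/hasP => [[m] | [m mshift /andP[msq /eqP ->]]].
  by rewrite mem_filter => /andP[msq mshift] ->; exists m; rewrite ?msq ?eqxx.
by exists m; rewrite // mem_filter msq.
Qed.

(* The values are never 0 or 1, so they are exactly the elements of I_{L,u}. *)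
Lemma mem_I_L (u v : F) : (2 : F) != 0 -> u != 0 -> u != 1 ->
  (v \in I_L u) = (v \in iso_values u).
Proof.
move=> two0 u0 u1; rewrite inE legendre_isoP // -mem_iso_values.
apply/andP/idP => [[] // | vin]; split => //.
move: vin; rewrite mem_iso_values => /hasP[m mshift /andP[_ /eqP ->]].
have /and3P[t10 t20 t21] := legendre_shift_nondeg u0 u1 mshift.
rewrite mulf_neq0 ?invr_eq0 //= -subr_eq0 -(divff t10) -mulrBl.
by rewrite mulf_neq0 ?subr_eq0 ?invr_eq0.
Qed.

Lemma card_I_L (u : F) : (2 : F) != 0 -> u != 0 -> u != 1 ->
  #|I_L u| = size (undup (iso_values u)).
Proof.
move=> two0 u0 u1; rewrite -(card_uniqP (undup_uniq _)); apply: eq_card => v.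
by rewrite mem_undup mem_I_L.
Qed.
End LegendreIsomorphisms.

Lemma frobenius_sqrt2 (R : comNzRingType) (p k : nat) (z : R) :
  p \in [pchar R] -> odd p -> z ^+ 4 = -1 ->
  let t := z - z ^+ 3 in
  t ^+ 2 = 2 /\ t ^+ (p ^ k) = (if (p ^ k %% 8)%N \in [:: 1; 7]%N then t else - t).
Proof.
move=> pR podd z4 t; split.
  rewrite (_ : t ^+ 2 = 2 + (z ^+ 2 - 2) * (z ^+ 4 + 1)); last by rewrite /t; ring.
  by rewrite z4 addNr mulr0 addr0.
have z8 : z ^+ 8 = 1 by rewrite (exprM z 4 2) z4 sqrrN expr1n.
have qodd : odd (p ^ k)%N by rewrite oddX podd orbT.
have frob : [pchar R].-nat (p ^ k)%N by rewrite pnatX (pnatE _ (pcharf_prime pR)) pR.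
have -> : t ^+ (p ^ k) = z ^+ (p ^ k) - (z ^+ (p ^ k)) ^+ 3.
  by rewrite /t exprDn_pchar // exprNn -signr_odd qodd expr1 mulN1r -!exprM mulnC.
rewrite -(expr_mod _ z8).
have z5 : z ^+ 5 = - z by rewrite (exprD z 4 1) z4 mulN1r expr1.
have z7 : z ^+ 7 = - z ^+ 3 by rewrite (exprD z 4 3) z4 mulN1r.
have z3cube : (z ^+ 3) ^+ 3 = z by rewrite -exprM (exprD z 8 1) z8 mul1r expr1.
have := odd_mod8 qodd; rewrite !inE => /or4P[] /eqP -> /=.
- by rewrite expr1.
- by rewrite z3cube opprB.
- by rewrite z5 /t; ring.
- by rewrite z7 -mulN1r exprMn z3cube /t; ring.
Qed.

Section QuadraticResidues.
Variable F : finFieldType.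
Hypothesis two_neq0 : (2 : F) != 0.

Local Notation q := #|F|.
Local Notation h := (#|F|.-1)./2.

Lemma odd_pchar : exists2 p, p \in [pchar F] & odd p.
Proof.
have [p p_pr pF] := finPcharP F; exists p => //.
have [p2 | //] := even_prime p_pr; move: two_neq0; rewrite -p2.
by rewrite (pcharf0 pF) eqxx.
Qed.

Lemma odd_card : odd q.
Proof.
have [p pF podd] := odd_pchar; have [k ->] := card_finRing_pchar pF.
by rewrite oddX podd orbT.
Qed.

Lemma card_half : q = (2 * h).+1.
Proof.
have := finNzRing_gt1 F; have := odd_card; case: #|F| => [|n] //= n_even _.
by rewrite -[n in LHS](odd_double_half n) (negPf n_even) add0n mul2n.
Qed.

Lemma card_pred_half : q.-1 = (2 * h)%N.
Proof. by rewrite {1}card_half. Qed.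

Lemma half_gt0 : (0 < h)%N.
Proof. by move: (finNzRing_gt1 F); rewrite {1}card_half; case: h. Qed.

Lemma N1_neq1 : (-1 : F) != 1.
Proof.
apply: contraNneq two_neq0 => e.
have -> : (2 : F) = 1 - -1 by ring.
by rewrite e subrr.
Qed.

Lemma unit_pow_card (x : F) : x != 0 -> x ^+ (2 * h) = 1.
Proof.
move=> x0; apply: (mulfI x0); rewrite mulr1 -exprS -card_half.
exact: expf_card.
Qed.

Lemma pow_half_sign (x : F) : x != 0 -> (x ^+ h == 1) || (x ^+ h == -1).
Proof. by move=> x0; rewrite -sqrf_eq1 -exprM mulnC unit_pow_card. Qed.

(* The nonzero elements are the q-1 roots of X^(q-1) - 1, hence F^* is cyclic. *)
Lemma primitive_root_exists : exists z : F, (2 * h).-primitive_root z.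
Proof.
pose units := [seq x <- enum F | x != 0].
have units_card : size units = (2 * h)%N.
  rewrite size_filter -card_pred_half -(cardC1 (0 : F)) cardE.
  by rewrite /enum_mem size_filter count_filter; apply: eq_count => x; rewrite !inE andbT.
suff /hasP[z _ zprim] : has (2 * h).-primitive_root units by exists z.
apply: has_prim_root.
- by rewrite muln_gt0 half_gt0.
- apply/allP => x; rewrite mem_filter unity_rootE => /andP[x0 _].
  by rewrite unit_pow_card.
- by rewrite filter_uniq ?enum_uniq.
- by rewrite units_card.
Qed.

(* Euler's criterion: x = z^i is a square iff i is even iff x^((q-1)/2) = 1. *)
Lemma euler_criterion (x : F) : x != 0 -> is_square x = (x ^+ h == 1).
Proof.
move=> x0; apply/existsP/eqP => [[y /eqP yx] | /eqP xh].
  have y0 : y != 0 by apply: contraNneq x0 => y0; rewrite -yx y0 expr0n.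
  by rewrite -yx -exprM unit_pow_card.
have [z zprim] := primitive_root_exists.
have [i xi] := prim_rootP zprim (unit_pow_card x0).
move: xh; rewrite xi -exprM -(prim_order_dvd zprim) dvdn_pmul2r ?half_gt0 // => i_even.
by exists (z ^+ (i %/ 2)); rewrite -exprM divnK.
Qed.

Lemma is_squareM (x y : F) : x != 0 -> y != 0 ->
  is_square (x * y) = (is_square x == is_square y).
Proof.
move=> x0 y0; rewrite !euler_criterion ?mulf_neq0 // exprMn.
have n1 := negPf N1_neq1; have n1' : (1 == -1 :> F) = false by rewrite eq_sym.
by case/orP: (pow_half_sign x0) => /eqP->; case/orP: (pow_half_sign y0) => /eqP->;
  rewrite ?mulr1 ?mul1r ?mulN1r ?opprK ?eqxx ?n1 ?n1'.
Qed.

Lemma is_square_opp (x : F) : x != 0 ->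
  is_square (- x) = (is_square (-1 : F) == is_square x).
Proof. by move=> x0; rewrite -[- x]mulN1r is_squareM ?oppr_eq0 ?oner_eq0. Qed.

Lemma is_square_N1 : is_square (-1 : F) = (q %% 4 == 1)%N.
Proof.
rewrite euler_criterion ?oppr_eq0 ?oner_eq0 // -signr_odd.
move: card_half; move: h => k qk; case: (boolP (odd k)) => kodd.
  by rewrite expr1 (negPf N1_neq1); apply/esym/eqP; lia.
by rewrite expr0 eqxx; apply/esym/eqP; lia.
Qed.

(* Second supplementary law, computed in F[X]/(X^4 + 1). *)
Lemma pow_half_two : (2 : F) ^+ h = if (q %% 8 \in [:: 1; 7])%N then 1 else -1.
Proof.
have [p pF podd] := odd_pchar; have [k cardF] := card_finRing_pchar pF.
pose M : {poly F} := 'X^4 + 1.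
have M_monic : M \is monic by apply: monicXnaddC.
have pR : p \in [pchar {poly %/ M}] by rewrite pchar_qpoly.
have z4 : ('qX : {poly %/ M}) ^+ 4 = -1.
  have M0 : in_qpoly M M = 0.
    apply: val_inj => /=; rewrite /mk_monic size_XnaddC // M_monic /=.
    exact: Pdiv.RingMonic.rmodpp.
  by rewrite -rmorphXn -[_ ^+ 4](addrK 1) rmorphB rmorph1 /= -/M M0 sub0r.
have [t_sq t_pow] := frobenius_sqrt2 k.+1 pR podd z4.
set t := _ - _ in t_sq t_pow; rewrite -cardF {1}card_half exprS exprM t_sq in t_pow.
set e : F := if _ then _ else _.
have {}t_pow : t * 2 ^+ h = t * qpolyC M e.
  by rewrite t_pow /e; case: ifP => _; rewrite ?rmorph1 ?rmorphN1 ?mulr1 ?mulrN1.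
have : t * t * 2 ^+ h = t * t * qpolyC M e by rewrite -!mulrA t_pow.
rewrite -expr2 t_sq -(rmorph_nat (qpolyC M) 2) -rmorphXn -!rmorphM => /(congr1 val).
by move=> /polyC_inj /(mulfI two_neq0).
Qed.

Lemma is_square_2 : is_square (2 : F) = (q %% 8 \in [:: 1; 7])%N.
Proof.
by rewrite euler_criterion // pow_half_two; case: ifP; rewrite ?eqxx ?(negPf N1_neq1).
Qed.

Lemma is_square_N2 : is_square (-2 : F) = (q %% 8 \in [:: 1; 3])%N.
Proof.
rewrite -mulN1r is_squareM ?oppr_eq0 ?oner_eq0 // is_square_N1 is_square_2.
rewrite -(@modn_dvdm 8 q 4) //.
by have := odd_mod8 odd_card; rewrite !inE => /or4P[] /eqP ->.
Qed.

(* A root of u^2 - u + 1 has order 6 when 3 <> 0, so 6 divides q - 1. *)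
Lemma sixth_root_card (u : F) : (3 : F) != 0 -> u ^+ 2 - u + 1 = 0 -> (6 %| q.-1)%N.
Proof.
move=> three0 w; have [u0 _] := sixth_root_neq01 w.
have u6 : u ^+ 6 = 1.
  have -> : u ^+ 6 = 1 + (u ^+ 3 - 1) * (u + 1) * (u ^+ 2 - u + 1) by ring.
  by rewrite w mulr0 addr0.
have not_root k (A B : F) : 3 = A * (u ^+ 2 - u + 1) + B * (u ^+ k - 1) -> u ^+ k != 1.
  by move=> e; apply: contraNneq three0 => uk; rewrite e w uk subrr !mulr0 addr0.
have uq : u ^+ ((q.-1) %% 6) = 1 by rewrite (expr_mod _ u6) card_pred_half unit_pow_card.
have r_even : ((q.-1) %% 6 \in [:: 0; 2; 4])%N.
  have : ~~ odd ((q.-1) %% 6) by rewrite odd_mod // card_pred_half oddM.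
  have := ltn_pmod q.-1 (isT : (0 < 6)%N).
  by move: ((q.-1) %% 6)%N => r; do 6?case: r => [|r] //.
move: r_even uq; rewrite /dvdn !inE => /or3P[] /eqP -> // /eqP; apply: contraLR => _.
- by apply: (not_root 2 (u + 2) (- (u + 1))); ring.
- by apply: (not_root 4 (1 - (u - 2) * u * (u + 1)) (u - 2)); ring.
Qed.

(* If moreover q <> 1 (mod 12) then q = 3 (mod 4), and -1, u (as u^3 = -1) and
   1 - u = u^-1 are all nonsquares. *)
Lemma sixth_root_nonsquares (u : F) : (3 : F) != 0 -> u ^+ 2 - u + 1 = 0 ->
  (q %% 12 != 1)%N -> [|| is_square (-1 : F), is_square u | is_square (1 - u)] = false.
Proof.
move=> three0 w q12; have [u0 _] := sixth_root_neq01 w.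
have nsN1 : is_square (-1 : F) = false.
  rewrite is_square_N1; move: (sixth_root_card three0 w) q12 card_half.
  by move: h #|F| => k n; lia.
have nsu : is_square u = false.
  have u3 : u * u ^+ 2 = -1.
    have -> : u * u ^+ 2 = (u + 1) * (u ^+ 2 - u + 1) - 1 by ring.
    by rewrite w mulr0 sub0r.
  have sq_u2 : is_square (u ^+ 2) by apply/existsP; exists u.
  by move: nsN1; rewrite -u3 is_squareM ?sq_u2 ?eqb_id // expf_neq0.
have inv_u : 1 - u = u^-1.
  by apply: (mulIf u0); rewrite mulVf // -[RHS]subr0 -w; ring.
by rewrite nsN1 nsu inv_u is_squareV nsu.
Qed.
End QuadraticResidues.

Section LegendreCount.
Variable F : finFieldType.
Hypothesis two_neq0 : (2 : F) != 0.

(* Outside B the six values are pairwise distinct: each cross difference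
   t2 s1 - s2 t1 is, up to sign, one of (u - 1)(u + 1), 2u - 1, u^2 - u + 1
   and u (u - 2). *)
Lemma legendre_values_uniq (u : F) : u != 0 -> u != 1 -> ~~ inB u ->
  uniq [seq m.2 / m.1.2 | m <- legendre_shifts u].
Proof.
move=> u0 u1; rewrite /inB !mulf_eq0 !negb_or => /andP[/andP[/andP[w0 up1] um2] tum1].
have ne (x y z t d : F) : y != 0 -> t != 0 -> d != 0 -> x * t - z * y = d -> x / y != z / t.
  by move=> y0 t0 d0 e; rewrite eqr_div // -subr_eq0 e.
have [n1 nN1 nNu nu1 n1u] : [/\ (1 : F) != 0, (-1 : F) != 0, - u != 0, u - 1 != 0 & 1 - u != 0].
  by rewrite oner_eq0 !oppr_eq0 oner_eq0 u0 !subr_eq0 [1 == _]eq_sym u1.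
have d1 : (u - 1) * (u + 1) != 0 by rewrite mulf_neq0.
have d4 : u * (u - 2) != 0 by rewrite mulf_neq0.
rewrite /= !inE !negb_or -!andbA; repeat (apply/andP; split).
all: first [ done
           | apply: (ne _ _ _ _ ((u - 1) * (u + 1))) => //; ring
           | apply: (ne _ _ _ _ (- ((u - 1) * (u + 1)))) => //; [rewrite oppr_eq0 // | ring]
           | apply: (ne _ _ _ _ (2 * u - 1)) => //; ring
           | apply: (ne _ _ _ _ (- (2 * u - 1))) => //; [rewrite oppr_eq0 // | ring]
           | apply: (ne _ _ _ _ (u ^+ 2 - u + 1)) => //; ring
           | apply: (ne _ _ _ _ (- (u ^+ 2 - u + 1))) => //; [rewrite oppr_eq0 // | ring]
           | apply: (ne _ _ _ _ (u * (u - 2))) => //; ring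
           | apply: (ne _ _ _ _ (- (u * (u - 2)))) => //; [rewrite oppr_eq0 // | ring] ].
Qed.

(* The generic count: one class member per square among 1, -1, u, -u, u-1, 1-u. *)
Lemma card_I_L_generic (u : F) : u != 0 -> u != 1 -> ~~ inB u ->
  #|I_L u| = (1 + is_square (-1 : F)%R + is_square u + is_square (- u)%R
              + is_square (u - 1)%R + is_square (1 - u)%R)%N.
Proof.
move=> u0 u1 uB; rewrite card_I_L // undup_id.
  by rewrite size_map size_filter /= is_square1; lia.
apply: subseq_uniq (legendre_values_uniq u0 u1 uB).
exact/map_subseq/filter_subseq.
Qed.

Lemma card_I_L_outside_B (u : F) : u != 0 -> u != 1 -> ~~ inB u ->
  #|I_L u| = if is_square (-1 : F)
             then (2 + 2 * is_square u + 2 * is_square (1 - u)%R)%N else 3%N.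
Proof.
move=> u0 u1 uB; have u1' : 1 - u != 0 by rewrite subr_eq0 eq_sym.
rewrite card_I_L_generic // -[u - 1]opprB.
rewrite (is_square_opp two_neq0 u0) (is_square_opp two_neq0 u1').
by case: (is_square (-1)); case: (is_square u); case: (is_square (1 - u)).
Qed.

Lemma orbit3_distinct : (3 : F) != 0 ->
  [/\ (-1 : F) != 2, (-1 : F) != 2^-1 & (2 : F) != 2^-1].
Proof.
move=> three0; have h2 : (2 : F) * 2^-1 = 1 by rewrite divff.
split; apply: contraNneq three0 => e.
- have -> : (3 : F) = 2 - -1 by ring.
  by rewrite e subrr.
- have -> : (3 : F) = 2 * (2^-1 - -1) by rewrite mulrBr h2; ring.
  by rewrite e subrr mulr0.
- have -> : (3 : F) = 2 * (2 - 2^-1) by rewrite mulrBr h2; ring.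
  by rewrite {2}e subrr mulr0.
Qed.

Lemma two_neq1 : (2 : F) != 1.
Proof. by rewrite -subr_eq0 (_ : 2 - 1 = 1 :> F) ?oner_eq0 //; ring. Qed.

Lemma iso_values_N1 :
  iso_values (-1 : F) =i
  [:: -1; 2] ++ if is_square (2 : F) || is_square (-2 : F) then [:: 2^-1] else [::].
Proof.
move=> v; rewrite mem_iso_values mem_cat /= opprK is_square1.
rewrite (_ : -1 - 1 = - 2 :> F); last by ring.
rewrite (_ : 1 + 1 = 2 :> F); last by ring.
rewrite !(divr1, div1r, invrN1, invrN, mulrN1, mulN1r, opprK) !inE orbF.
by case: (is_square (-1)); case: (is_square 2); case: (is_square (-2));
   rewrite /= ?inE; case: (v == -1); case: (v == 2); case: (v == 2^-1).
Qed.

Lemma card_I_L_N1 : (3 : F) != 0 ->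
  #|I_L (-1 : F)| = (2 + (is_square (2 : F)%R || is_square (-2 : F)%R))%N.
Proof.
move=> three0; have [n12 n1h n2h] := orbit3_distinct three0.
have N10 : (-1 : F) != 0 by rewrite oppr_eq0 oner_eq0.
rewrite card_I_L ?N1_neq1 // (size_undup_eqi iso_values_N1); first by case: ifP.
by case: ifP => _; rewrite /= !inE ?negb_or ?n12 ?n1h ?n2h.
Qed.

(* In characteristic 3 the orbit collapses: -1 = 2 = 1/2. *)
Lemma card_I_L_char3 : (3 : F) = 0 -> #|I_L (-1 : F)| = 1%N.
Proof.
move=> three0; have two : (2 : F) = -1 by rewrite -[RHS]add0r -three0; ring.
have N10 : (-1 : F) != 0 by rewrite oppr_eq0 oner_eq0.
rewrite card_I_L ?N1_neq1 // (@size_undup_eqi _ _ [:: -1]) // => v.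
by rewrite iso_values_N1 two invrN1 mem_cat !inE; case: ifP; rewrite /= ?inE ?orbb ?orbF.
Qed.

Lemma iso_values_2 :
  iso_values (2 : F) =i
  [:: 2; -1] ++ if is_square (2 : F) || is_square (-2 : F) then [:: 2^-1] else [::].
Proof.
move=> v; rewrite mem_iso_values mem_cat /= is_square1.
rewrite (_ : 2 - 1 = 1 :> F); last by ring.
rewrite (_ : 1 - 2 = -1 :> F); last by ring.
rewrite !(divr1, div1r, invrN1, invrN, mulrN1, mulN1r, mulrN, opprK) is_square1 !inE orbF.
by case: (is_square (-1)); case: (is_square 2); case: (is_square (-2));
   rewrite /= ?inE; case: (v == -1); case: (v == 2); case: (v == 2^-1).
Qed.

Lemma card_I_L_2 : (3 : F) != 0 ->
  #|I_L (2 : F)| = (2 + (is_square (2 : F)%R || is_square (-2 : F)%R))%N.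
Proof.
move=> three0; have [n12 n1h n2h] := orbit3_distinct three0.
rewrite card_I_L ?two_neq1 // (size_undup_eqi iso_values_2); first by case: ifP.
by case: ifP => _; rewrite /= !inE ?negb_or 1?eq_sym ?n12 ?n1h ?n2h.
Qed.

Lemma iso_values_half :
  iso_values (2^-1 : F) =i
  2^-1 :: if is_square (2 : F) || is_square (-2 : F) then [:: 2; -1] else [::].
Proof.
move=> v; rewrite mem_iso_values /= is_square1.
rewrite (_ : 2^-1 - 1 = - 2^-1 :> F); last by field.
rewrite (_ : 1 - 2^-1 = 2^-1 :> F); last by field.
rewrite -invrN !is_squareV.
rewrite !(divr1, div1r, invrK, invrN1, invrN, mulrN1, mulN1r, mulrN, mulNr, opprK).
rewrite mul1r mulVf // !inE orbF.
by case: (is_square (-1)); case: (is_square 2); case: (is_square (-2));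
   rewrite /= ?inE; case: (v == -1); case: (v == 2); case: (v == 2^-1).
Qed.

Lemma card_I_L_half : (3 : F) != 0 ->
  #|I_L (2^-1 : F)| = (1 + 2 * (is_square (2 : F)%R || is_square (-2 : F)%R))%N.
Proof.
move=> three0; have [n12 n1h n2h] := orbit3_distinct three0.
rewrite card_I_L ?invr_eq0 ?invr_eq1 ?two_neq1 // (size_undup_eqi iso_values_half).
  by case: ifP.
by case: ifP => _ //=; rewrite !inE !negb_or (eq_sym (2 : F)) !(eq_sym (2^-1 : F)) n2h n1h n12.
Qed.

Lemma iso_values_omega (u : F) : u ^+ 2 - u + 1 = 0 ->
  iso_values u =i
  u :: if [|| is_square (-1 : F), is_square u | is_square (1 - u)] then [:: 1 - u] else [::].
Proof.
move=> w v; have [u0 u1] := sixth_root_neq01 w.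
have div_w (x y z : F) : y != 0 -> (x - z * y) ^+ 2 = (u ^+ 2 - u + 1) ^+ 2 -> x / y = z.
  move=> y0; rewrite w expr0n /= => /eqP; rewrite expf_eq0 /= subr_eq0 => /eqP ->.
  exact: mulfK.
have [Nu0 u10 u10'] : [/\ - u != 0, u - 1 != 0 & 1 - u != 0].
  by rewrite oppr_eq0 u0 !subr_eq0 u1 eq_sym.
rewrite mem_iso_values /= is_square1 divr1 invrN1 mulrN1 opprB.
rewrite (div_w 1 u (1 - u)) //; last by ring.
rewrite (div_w (-1) (u - 1) u) //; last by ring.
rewrite (div_w (1 - u) (- u) u) //; last by ring.
rewrite (div_w (- u) (1 - u) (1 - u)) //; last by ring.
rewrite !inE orbF.
by case: (is_square (-1)); case: (is_square u); case: (is_square (1 - u));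
   case: (is_square (u - 1)); case: (is_square (- u));
   rewrite /= ?inE; case: (v == u); case: (v == 1 - u).
Qed.

Lemma card_I_L_omega (u : F) : (3 : F) != 0 -> u ^+ 2 - u + 1 = 0 ->
  #|I_L u| = (1 + [|| is_square (-1 : F)%R, is_square u | is_square (1 - u)%R])%N.
Proof.
move=> three0 w; have [u0 u1] := sixth_root_neq01 w.
have u_1u : u != 1 - u.
  apply: contraNneq three0 => e.
  have -> : (3 : F) = 4 * (u ^+ 2 - u + 1) - (u - (1 - u)) ^+ 2 by ring.
  by rewrite w {1}e subrr expr0n /= mulr0 subrr.
rewrite card_I_L // (size_undup_eqi (iso_values_omega w)); first by case: ifP.
by case: ifP => _ //=; rewrite inE u_1u.
Qed.
End LegendreCount.

Section MainCases.
Variables (F : finFieldType) (p : nat).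
Hypotheses (hp : p \in [pchar F]) (hp3 : (3 <= p)%N).

Local Notation q := #|F|.

Lemma pchar_two_neq0 : (2 : F) != 0.
Proof. by rewrite (natr_eq0_pchar hp) //; apply: contraTneq hp3 => ->. Qed.

Lemma pchar_three_eq0 : ((3 : F) == 0) = (p == 3%N).
Proof. exact: natr_eq0_pchar. Qed.

(* 2 or -2 is a square unless q = 5 (mod 8), which cannot happen for p = 3. *)
Lemma square_2_or_N2 : (is_square (2 : F) || is_square (-2 : F)) = (q %% 8 != 5)%N.
Proof.
rewrite is_square_2 ?is_square_N2 ?pchar_two_neq0 //.
by have := odd_mod8 (odd_card pchar_two_neq0); rewrite !inE => /or4P[] /eqP ->.
Qed.

Lemma mod8_5_three_neq0 : (q %% 8 == 5)%N -> (3 : F) != 0.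
Proof.
move=> /eqP q5; rewrite pchar_three_eq0; apply/eqP => p3.
have [k cardF] := card_finRing_pchar hp; rewrite cardF p3 in q5.
by move: (pow3_mod8 k.+1); rewrite q5.
Qed.

Variables (u : F) (hu0 : u != 0) (hu1 : u != 1).

Lemma case_char3 : (u == -1) && (p == 3%N) -> #|I_L u| = 1%N.
Proof.
by case/andP => /eqP -> p3; apply: card_I_L_char3; rewrite ?pchar_two_neq0 //; apply/eqP;
  rewrite pchar_three_eq0.
Qed.

Lemma case_orbit3 : (u \in [:: -1; 2; 2^-1]) && (q %% 8 \in [:: 1; 3; 7])%N && (3 < p)%N ->
  #|I_L u| = 3%N.
Proof.
case/andP => /andP[hu hq] p3; have two0 := pchar_two_neq0.
have three0 : (3 : F) != 0 by rewrite pchar_three_eq0 gtn_eqF.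
have flag : is_square (2 : F) || is_square (-2 : F).
  by rewrite square_2_or_N2; move: hq; rewrite !inE => /or3P[] /eqP ->.
move: hu; rewrite !inE => /or3P[] /eqP ->.
- by rewrite card_I_L_N1 // flag.
- by rewrite card_I_L_2 // flag.
- by rewrite card_I_L_half // flag.
Qed.

Lemma case_orbit3_mod8_5 : (u \in [:: -1; 2]) && (q %% 8 == 5)%N -> #|I_L u| = 2%N.
Proof.
case/andP => hu q5; have two0 := pchar_two_neq0; have three0 := mod8_5_three_neq0 q5.
have noflag : (is_square (2 : F) || is_square (-2 : F)) = false by rewrite square_2_or_N2 q5.
move: hu; rewrite !inE => /orP[] /eqP ->.
- by rewrite card_I_L_N1 // noflag.
- by rewrite card_I_L_2 // noflag.
Qed.

Lemma case_half_mod8_5 : (u == 2^-1) && (q %% 8 == 5)%N -> #|I_L u| = 1%N.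
Proof.
case/andP => /eqP -> q5; have two0 := pchar_two_neq0.
by rewrite card_I_L_half ?mod8_5_three_neq0 // square_2_or_N2 q5.
Qed.

Lemma case_omega_mod12_1 :
  (u ^+ 2 - u + 1 == 0) && (q %% 12 == 1)%N && (3 < p)%N -> #|I_L u| = 2%N.
Proof.
case/andP => /andP[/eqP w /eqP q12] p3; have two0 := pchar_two_neq0.
rewrite card_I_L_omega ?pchar_three_eq0 ?gtn_eqF // is_square_N1 //.
by rewrite -(@modn_dvdm 12 _ 4) // q12 modn_small.
Qed.

(* For p = 3 the only root of X^2 - X + 1 = (X + 1)^2 is -1. *)
Lemma case_omega_not_mod12_1 :
  (u ^+ 2 - u + 1 == 0) && (q %% 12 != 1)%N -> #|I_L u| = 1%N.
Proof.
case/andP => /eqP w q12; have two0 := pchar_two_neq0.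
have [p3 | p_ne3] := eqVneq p 3%N.
  have three0 : (3 : F) = 0 by apply/eqP; rewrite pchar_three_eq0 p3.
  have -> : u = -1.
    apply/eqP; rewrite -addr_eq0 -sqrf_eq0.
    have -> : (u + 1) ^+ 2 = u ^+ 2 - u + 1 + 3 * u by ring.
    by rewrite w three0 mul0r addr0.
  exact: card_I_L_char3.
have three0 : (3 : F) != 0 by rewrite pchar_three_eq0.
by rewrite card_I_L_omega // sixth_root_nonsquares.
Qed.

Lemma case_outside_B :
  [/\ (chi2 (-1 : F) == -1) && ~~ inB u -> #|I_L u| = 3%N,
      (chi2 (-1 : F) == 1) && (chi2 u == -1) && (chi2 (1 - u) == -1) && ~~ inB u
        -> #|I_L u| = 2%N,
      (chi2 (-1 : F) == 1) && (chi2 u * chi2 (1 - u) == -1) && ~~ inB u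
        -> #|I_L u| = 4%N
    & (chi2 (-1 : F) == 1) && (chi2 u == 1) && (chi2 (1 - u) == 1) && ~~ inB u
        -> #|I_L u| = 6%N].
Proof.
have u1' : 1 - u != 0 by rewrite subr_eq0 eq_sym.
have N10 : (-1 : F) != 0 by rewrite oppr_eq0 oner_eq0.
split=> /andP[chis uB]; rewrite card_I_L_outside_B ?pchar_two_neq0 //; move: chis;
  rewrite !chi2E //; by case: (is_square (-1)); case: (is_square u); case: (is_square (1 - u)).
Qed.
End MainCases.

Theorem mainTheorem2 (F : finFieldType) (p : nat)
    (hp : p \in [pchar F]) (hp3 : (3 <= p)%N)
    (u : F) (hu0 : u != 0) (hu1 : u != 1) :
  let q := #|F| in
  let n := #|I_L u| in
  ((u == -1) && (p == 3%N) -> n = 1%N) /\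
  ((u \in [:: -1; 2; 2^-1]) && (q %% 8 \in [:: 1; 3; 7])%N && (3 < p)%N
     -> n = 3%N) /\
  ((u \in [:: -1; 2]) && ((q %% 8)%N == 5%N) -> n = 2%N) /\
  ((u == 2^-1) && ((q %% 8)%N == 5%N) -> n = 1%N) /\
  ((u ^+ 2 - u + 1 == 0) && ((q %% 12)%N == 1%N) && (3 < p)%N -> n = 2%N) /\
  ((u ^+ 2 - u + 1 == 0) && ((q %% 12)%N != 1%N) -> n = 1%N) /\
  ((chi2 (-1 : F) == -1) && ~~ inB u -> n = 3%N) /\
  ((chi2 (-1 : F) == 1) && (chi2 u == -1) && (chi2 (1 - u) == -1) && ~~ inB u
     -> n = 2%N) /\
  ((chi2 (-1 : F) == 1) && (chi2 u * chi2 (1 - u) == -1) && ~~ inB u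
     -> n = 4%N) /\
  ((chi2 (-1 : F) == 1) && (chi2 u == 1) && (chi2 (1 - u) == 1) && ~~ inB u
     -> n = 6%N).
Proof.
move=> q n; rewrite {}/n {}/q.
have [chi_N1 chi_2 chi_4 chi_6] := case_outside_B hp hp3 hu0 hu1.
split; first exact: (case_char3 hp hp3).
split; first exact: (case_orbit3 hp hp3).
split; first exact: (case_orbit3_mod8_5 hp hp3).
split; first exact: (case_half_mod8_5 hp hp3).
split; first exact: (case_omega_mod12_1 hp hp3).
split; first exact: (case_omega_not_mod12_1 hp hp3).
by [].
Qed.
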